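(* If $r\ge 2$, then the glued binary tree $GT(r)$ satisfies $\mu(GT(r))=2^r+1$, and the number of $\mu$-sets of $GT(r)$ is $\#\mu(GT(r))=2^{r+1}-2$.
   Context: A perfect binary tree of depth $r\ge1$ is a rooted tree in which every non-leaf vertex has exactly $2$ children and all leaves have depth $r$. The glued binary tree $GT(r)$ is obtained from two copies of the perfect binary tree of depth $r$ by pairwise identifying their leaves (via a fixed isomorphism of the copies). For $S\subseteq V(G)$, two vertices $u,v$ are $S$-visible if there exists a shortest $u,v$-path $P$ with $V(P)\cap S\subseteq\{u,v\}$; $S$ is a mutual-visibility set if every two vertices of $S$ are $S$-visible. A largest mutual-visibility set is a $\mu$-set, and its size is the mutual-visibility number $\mu(G)$. $\#\mu(G)$ denotes the number of $\mu$-sets of $G$. *)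

From mathcomp Require Import all_boot.
Set Implicit Arguments. Unset Strict Implicit. Unset Printing Implicit Defensive.

Section Graph.
Variables (T : finType) (e : rel T).

Definition walk (u : T) (p : seq T) (v : T) : Prop :=
  path e u p /\ last u p = v.

Definition shortest_path (u : T) (p : seq T) (v : T) : Prop :=
  walk u p v /\ forall q, walk u q v -> size p <= size q.

Definition S_visible (S : {set T}) (u v : T) : Prop :=
  exists p, shortest_path u p v /\
    forall x, x \in u :: p -> x \in S -> x = u \/ x = v.

Definition mutual_visibility_set (S : {set T}) : Prop :=
  forall u v, u \in S -> v \in S -> S_visible S u v.

Definition mu_set (S : {set T}) : Prop :=
  mutual_visibility_set S /\
  forall S', mutual_visibility_set S' -> #|S'| <= #|S|.

Definition mu_number (n : nat) : Prop :=
  (exists S, mutual_visibility_set S /\ #|S| = n) /\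
  forall S, mutual_visibility_set S -> #|S| <= n.

Definition num_mu_sets (k : nat) : Prop :=
  exists M : {set {set T}}, (forall S, S \in M <-> mu_set S) /\ #|M| = k.
End Graph.

(* A vertex of a perfect binary tree of depth r is a binary word of length d <= r
   (the root is the empty word, the children of w are w++[0] and w++[1]).
   A vertex of GT(r) is a pair (copy, word); the leaves (words of length r)
   of the two copies are identified, represented with copy = false. *)
Definition GTV (r : nat) :=
  {x : bool * {d : 'I_r.+1 & d.-tuple bool} | (tag x.2 == r :> nat) ==> ~~ x.1}.

Definition gt_copy r (x : GTV r) : bool := (val x).1.
Definition gt_word r (x : GTV r) : seq bool := tagged (val x).2.

Definition gt_child r (x y : GTV r) : bool :=
  (gt_word y \in [:: rcons (gt_word x) false; rcons (gt_word x) true]) &&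
  ((gt_copy x == gt_copy y) || (size (gt_word y) == r)).

Definition gt_adj r : rel (GTV r) := fun x y => gt_child x y || gt_child y x.

From mathcomp Require Import all_boot zify.
Set Implicit Arguments. Unset Strict Implicit. Unset Printing Implicit Defensive.

(* Between two vertices of one
   copy the distance is the tree distance of their words; a geodesic between
   them meets the leaf level only at its ends, hence stays inside one copy, and
   passes through each inner vertex of the tree geodesic.
   Let S be a mutual-visibility set and P_c its non-leaves in copy c.  If
   |P_c| >= 2, every x in P_c has a "shadow" of at least two leaves l such that
   x lies strictly between l and all other vertices of P_c; the shadows are
   pairwise disjoint and avoid S, since x lies on every geodesic from the rest
   of P_c to them, so 2|P_c| leaves are missing from S.  If S has non-leaves in
   both copies, then for suitable pairs of leaves all geodesics are blocked by
   one of them, so again two leaves are missing.  Counting gives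
   |S| <= 2^r + 1, with equality exactly when S consists of the leaves and one
   inner vertex; conversely every such set is a mutual-visibility set, and
   there are 2^(r+1) - 2 inner vertices. *)

Section Prefix.
Variable T : eqType.
Implicit Types s u v : seq T.

Lemma prefix_total u v s : prefix u s -> prefix v s -> prefix u v || prefix v u.
Proof.
wlog le_uv : u v / size u <= size v => [hw hu hv|].
  by case: (leqP (size u) (size v)) => [|/ltnW] /hw; [apply | rewrite orbC; apply].
move=> /prefixP [a ->] /prefixP [b e]; rewrite prefixE.
by have := congr1 (take (size u)) e; rewrite take_size_cat // takel_cat // => <-; rewrite eqxx.
Qed.

Lemma prefix_size_eq u s : prefix u s -> size u = size s -> u = s.
Proof. by rewrite prefixE => /eqP + e; rewrite e take_size. Qed.

Lemma prefix_rconsl u x s : prefix (rcons u x) s -> prefix u s.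
Proof. by rewrite -cats1; apply: catl_prefix. Qed.

Lemma prefix_rconsr u x s : prefix u s -> prefix u (rcons s x).
Proof. by rewrite -cats1; apply: prefix_catl. Qed.

Lemma prefix_rcons_inj u x y s : prefix (rcons u x) s -> prefix (rcons u y) s -> x = y.
Proof.
move=> hx hy; have /orP [] := prefix_total hx hy => /prefix_size_eq;
  by rewrite !size_rcons => /(_ erefl) /rcons_inj [].
Qed.

Lemma prefix_rcons_nth x0 u s : prefix u s -> size u < size s ->
  prefix (rcons u (nth x0 s (size u))) s.
Proof.
move=> /prefixP [a ->]; rewrite size_cat -ltn_subLR ?subnn // nth_cat ltnn subnn.
by case: a => //= x a _; rewrite -cats1 prefix_catr // eqxx /= eqxx prefix0s.
Qed.

End Prefix.

Lemma prefix_rcons_negb (u s : seq bool) b : prefix (rcons u (~~ b)) s -> ~~ prefix (rcons u b) s.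
Proof. by move=> h; apply/negP => /prefix_rcons_inj /(_ h); case: (b). Qed.

Lemma prefix_rcons_neq (w a : seq bool) x : prefix (rcons w x) a -> a != w.
Proof. by move/size_prefix; rewrite size_rcons; apply: contraTneq => ->; rewrite ltnn. Qed.

Fixpoint lcp (s t : seq bool) : nat :=
  if s is x :: s' then if t is y :: t' then (if x == y then (lcp s' t').+1 else 0) else 0
  else 0.

Lemma lcpC s t : lcp s t = lcp t s.
Proof. by elim: s t => [|x s IH] [|y t] //=; rewrite eq_sym IH. Qed.

Lemma lcp_sizel s t : lcp s t <= size s.
Proof. by elim: s t => [|x s IH] [|y t] //=; case: (x == y) => //; apply: IH. Qed.

Lemma lcp_sizer s t : lcp s t <= size t.
Proof. by rewrite lcpC lcp_sizel. Qed.

Lemma lcpss s : lcp s s = size s.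
Proof. by elim: s => //= x s ->; rewrite eqxx. Qed.

Lemma leq_min_lcp a b c : minn (lcp a b) (lcp b c) <= lcp a c.
Proof.
elim: a b c => [|x a IH] [|y b] [|z c] //=; rewrite ?minn0 ?min0n //.
case: (x =P y) => [<-|_]; last by rewrite min0n.
by case: (x == z); rewrite ?minnSS ?ltnS ?IH ?minn0.
Qed.

Lemma prefix_lcp (s t : seq bool) : prefix s t = (lcp s t == size s).
Proof. by elim: s t => [|x s IH] [|y t] //=; case: (x == y); rewrite ?IH. Qed.

Lemma lcp_sep (w a b : seq bool) x :
  prefix (rcons w x) a -> ~~ prefix (rcons w x) b -> lcp a b = lcp w b.
Proof.
elim: w a b => [|y w IH] [|y' a] [|z b] //=; case/andP => /eqP <-.
  by move=> _; case: (x == z); rewrite ?prefix0s.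
by move=> wa; case: (y == z) => //= /(IH _ _ wa) ->.
Qed.

Lemma lcp_size_eq s t : lcp s t = size s -> size s = size t -> s = t.
Proof. by move=> /eqP; rewrite -prefix_lcp; apply: prefix_size_eq. Qed.

(* [lcp a b] is the depth of the deepest common ancestor of [a] and [b] in the
   infinite binary tree of words. *)
Definition tree_dist (a b : seq bool) := size a + size b - 2 * lcp a b.

Lemma tree_distC a b : tree_dist a b = tree_dist b a.
Proof. by rewrite /tree_dist lcpC addnC. Qed.

Lemma tree_distss a : tree_dist a a = 0.
Proof. rewrite /tree_dist lcpss; lia. Qed.

Lemma tree_dist_eq0 a b : tree_dist a b = 0 -> a = b.
Proof.
rewrite /tree_dist => h; have := lcp_sizel a b; have := lcp_sizer a b.
by move=> *; apply: lcp_size_eq; lia.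
Qed.

Lemma tree_dist_prefix (u s : seq bool) : prefix u s -> tree_dist u s = size s - size u.
Proof. by rewrite prefix_lcp /tree_dist => /eqP ->; lia. Qed.

Lemma tree_dist_sep (a b w : seq bool) x : prefix (rcons w x) a -> ~~ prefix (rcons w x) b ->
  tree_dist a b = tree_dist a w + tree_dist w b.
Proof.
move=> wxa wxb; have lt_wa : size w < size a by rewrite -(size_rcons w x) size_prefix.
rewrite (tree_distC a w) (tree_dist_prefix (prefix_rconsl wxa)) /tree_dist (lcp_sep wxa wxb).
by have := lcp_sizel w b; have := lcp_sizer w b; lia.
Qed.

Lemma tree_dist_rcons_nprefix (w t : seq bool) x :
  ~~ prefix (rcons w x) t -> tree_dist (rcons w x) t = (tree_dist w t).+1.
Proof.
move=> wxt; rewrite (tree_dist_sep (prefix_refl _) wxt) tree_distC.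
by rewrite (tree_dist_prefix (prefix_rcons w x)) size_rcons subSnn.
Qed.

Lemma tree_dist_rcons (w t : seq bool) x :
  tree_dist (rcons w x) t = (tree_dist w t).+1 \/ tree_dist w t = (tree_dist (rcons w x) t).+1.
Proof.
have [wxt|/tree_dist_rcons_nprefix] := boolP (prefix (rcons w x) t); last by left.
have lt_wt : size w < size t by rewrite -(size_rcons w x) size_prefix.
by right; rewrite !tree_dist_prefix ?(prefix_rconsl wxt) // size_rcons; lia.
Qed.

(* [tree_inner a b w]: [w] is an inner vertex of the tree geodesic between [a]
   and [b], i.e. some child of [w] is an ancestor of one endpoint only and the
   other endpoint is not [w] itself. *)
Definition sep_branch (a b w : seq bool) : bool :=
  [exists x, prefix (rcons w x) a && ~~ prefix (rcons w x) b] && (b != w).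

Definition tree_inner (a b w : seq bool) := sep_branch a b w || sep_branch b a w.

Lemma sep_branchP a b w :
  reflect (exists x, [/\ prefix (rcons w x) a, ~~ prefix (rcons w x) b & b != w])
          (sep_branch a b w).
Proof.
apply: (iffP andP) => [[/existsP [x /andP [? ?]] ?]|[x [? ? ?]]]; first by exists x.
by split=> //; apply/existsP; exists x; apply/andP.
Qed.

Lemma sep_branchI a b w x :
  prefix (rcons w x) a -> ~~ prefix (rcons w x) b -> b != w -> sep_branch a b w.
Proof. by move=> *; apply/sep_branchP; exists x. Qed.

Lemma tree_inner_neq a b w : tree_inner a b w -> [/\ a != w, b != w & a != b].
Proof.
case/orP => /sep_branchP [x [wxa wxb ?]]; split=> //; do ?exact: prefix_rcons_neq wxa.
  by apply: contraNneq wxb => <-.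
by apply: contraNneq wxb => ->.
Qed.

Lemma tree_inner_dist a b w : tree_inner a b w -> tree_dist a b = tree_dist a w + tree_dist w b.
Proof.
case/orP => /sep_branchP [x [wxa wxb _]]; first exact: tree_dist_sep wxa wxb.
by rewrite tree_distC (tree_dist_sep wxa wxb) addnC tree_distC (tree_distC b).
Qed.

Lemma tree_dist_deepest (a b w : seq bool) : size a <= size w -> size b <= size w ->
  tree_dist a w + tree_dist w b <= tree_dist a b -> w = a \/ w = b.
Proof.
rewrite /tree_dist => ha hb hd; have m := leq_min_lcp a w b.
have := lcp_sizel a w; have := lcp_sizer a w; have := lcp_sizel w b; have := lcp_sizer w b.
have := lcp_sizel a b; have := lcp_sizer a b => *.
have := lcpC a w; case: (leqP (lcp a w) (lcp w b)) => *; [right | left];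
  by apply: lcp_size_eq; lia.
Qed.

Lemma tree_inner_split (a b v : seq bool) x : prefix [:: x] a -> prefix [:: ~~ x] b ->
  prefix v a -> size v < size a -> b != v -> tree_inner a b v.
Proof.
move=> xa nxb va lt_va neq_bv; have child_a := prefix_rcons_nth false va lt_va.
apply/orP; left; apply: (sep_branchI child_a) => //; apply/negP => child_b.
have x_child : prefix [:: x] (rcons v (nth false a (size v))).
  have /orP [//|child_x] := prefix_total xa child_a.
  have := size_prefix child_x; rewrite size_rcons /= ltnS leqn0 => /nilP v0.
  by rewrite (prefix_size_eq child_x) ?prefix_refl // v0.
by move: (@prefix_rcons_negb [::] b x nxb); rewrite (prefix_trans x_child child_b).
Qed.

Lemma card_gt1_neq (T : finType) (A : {set T}) x : 1 < #|A| -> exists2 z, z \in A & z != x.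
Proof.
case/card_gt1P => a [b [aA bA neq_ab]]; have [eax|] := eqVneq a x; last by exists a.
by exists b; rewrite // -eax eq_sym.
Qed.

Lemma sum_card_disjoint (T I : finType) (P : {set I}) (E : I -> {set T}) (U : {set T}) :
  (forall x, x \in P -> E x \subset U) ->
  (forall x y, x \in P -> y \in P -> x != y -> [disjoint E x & E y]) ->
  \sum_(x in P) #|E x| <= #|U|.
Proof.
elim: {P}#|P| {-2}P (erefl #|P|) U => [|n IH] P cardP U sub dis.
  by move/eqP: cardP; rewrite cards_eq0 => /eqP ->; rewrite big_set0.
have [x xP] : exists x, x \in P by apply/set0Pn; rewrite -card_gt0 cardP.
rewrite (big_setD1 x xP) /= -(cardsID (E x) U) (setIidPr (sub x xP)) leq_add2l.
apply: IH => [|y|y z]; first by move: cardP; rewrite (cardsD1 x P) xP => -[].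
  rewrite !inE => /andP [neq_yx yP]; apply/subsetP => l ly.
  by rewrite inE (subsetP (sub y yP) l ly) (disjointFr (dis y x yP xP neq_yx) ly).
by rewrite !inE => /andP [_ yP] /andP [_ zP]; apply: dis.
Qed.

Lemma leq_add_halves p q m : (1 < p -> 2 * p <= m) -> (1 < q -> 2 * q <= m) ->
  (0 < p -> 0 < q -> 1 < m) -> p + q <= m.+1 /\ (p + q = m.+1 -> m = 0).
Proof.
move=> hp hq hpq; case: (ltnP 1 p) => [/hp|] ?; case: (ltnP 1 q) => [/hq|] ?;
  case: (posnP p) => [|/hpq] ?; case: (posnP q) => [|?]; try have := hpq _ _; lia.
Qed.

Lemma sum_exp2 n : \sum_(i < n) 2 ^ i = (2 ^ n).-1.
Proof.
elim: n => [|n IH]; first by rewrite big_ord0.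
by rewrite big_ord_recr /= IH expnS; have := expn_gt0 2 n; lia.
Qed.

Lemma tagged_tuple_inj (T : Type) n (u v : {d : 'I_n & d.-tuple T}) :
  tagged u = tagged v :> seq T -> u = v.
Proof.
case: u v => [d t] [d' t'] /= e.
have dd' : d = d' by apply: val_inj; rewrite /= -(size_tuple t) -(size_tuple t') e.
by subst d'; congr existT; apply: val_inj.
Qed.

Section GluedTree.
Variable r : nat.
Notation V := (GTV r).
Notation adj := (@gt_adj r).

Lemma size_gt_word (x : V) : size (gt_word x) <= r.
Proof. by rewrite /gt_word size_tuple -ltnS ltn_ord. Qed.

Lemma gt_leaf_copy (x : V) : size (gt_word x) = r -> gt_copy x = false.
Proof.
case: x => [[c [d t]]] /= P; rewrite /gt_word /gt_copy /= size_tuple => hd.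
by move: P; rewrite hd eqxx /=; case: c.
Qed.

Lemma gt_vertex_eq (x y : V) : gt_copy x = gt_copy y -> gt_word x = gt_word y -> x = y.
Proof.
case: x y => [[c u] P] [[c' u'] P']; rewrite /gt_copy /gt_word /= => cc' /tagged_tuple_inj uu'.
by subst c' u'; congr exist; apply: bool_irrelevance.
Qed.

Definition word_tag (w : seq bool) : {d : 'I_r.+1 & d.-tuple bool} :=
  match ltnP (size w) r.+1 with
  | LtnNotGeq h => existT _ (Ordinal h) (in_tuple w)
  | GeqNotLtn _ => existT (fun d : 'I_r.+1 => d.-tuple bool) ord0 [tuple]
  end.

Lemma word_tagK w : size w <= r -> tagged (word_tag w) = w :> seq bool.
Proof. by rewrite /word_tag -ltnS; case: ltnP. Qed.

Lemma word_tag_leaf c w : (tag (word_tag w) == r :> nat) ==> ~~ (c && (size w < r)).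
Proof.
rewrite /word_tag; case: ltnP => /= h; apply/implyP.
  by move=> /eqP <-; rewrite ltnn andbF.
by rewrite ltnNge ltnW // andbF.
Qed.

(* Words of length [r] give the shared leaf whatever [c] is; longer words give junk. *)
Definition gt_vtx c w : V := exist _ (c && (size w < r), word_tag w) (word_tag_leaf c w).

Lemma gt_vtx_word c w : size w <= r -> gt_word (gt_vtx c w) = w.
Proof. exact: word_tagK. Qed.

Lemma gt_vtx_copy c w : gt_copy (gt_vtx c w) = c && (size w < r).
Proof. by []. Qed.

Definition in_copy c (x : V) := (size (gt_word x) == r) || (gt_copy x == c).

Definition leaves : {set V} := [set x | size (gt_word x) == r].
Definition inner_copy c : {set V} := [set x | (size (gt_word x) < r) && (gt_copy x == c)].

Lemma leaves_in_copy c x : x \in leaves -> in_copy c x.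
Proof. by rewrite inE /in_copy => ->. Qed.

Lemma leaf_word_neq (l : V) w : l \in leaves -> size w < r -> gt_word l != w.
Proof. by rewrite inE => /eqP leaf_l; apply: contraTneq => <-; rewrite leaf_l ltnn. Qed.

Lemma gt_vtxE c (x : V) : in_copy c x -> gt_vtx c (gt_word x) = x.
Proof.
move=> hx; apply: gt_vertex_eq; rewrite ?gt_vtx_word ?size_gt_word // gt_vtx_copy.
have := size_gt_word x; rewrite leq_eqVlt => /orP [/eqP e|lt_xr].
  by rewrite e ltnn andbF gt_leaf_copy.
by move: hx; rewrite lt_xr andbT /in_copy (ltn_eqF lt_xr) => /eqP.
Qed.

Lemma inner_copyP c x :
  reflect (size (gt_word x) < r /\ gt_copy x = c) (x \in inner_copy c).
Proof. by rewrite inE; apply: (iffP andP) => -[-> /eqP ->]. Qed.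

Lemma inner_copy_in_copy c x : x \in inner_copy c -> in_copy c x.
Proof. by case/inner_copyP => _ cx; rewrite /in_copy cx eqxx orbT. Qed.

Lemma inner_copy_vtx c x : x \in inner_copy c -> gt_vtx c (gt_word x) = x.
Proof. by move/inner_copy_in_copy; apply: gt_vtxE. Qed.

Lemma gt_adj_sym : symmetric adj.
Proof. by move=> x y; rewrite /gt_adj orbC. Qed.

Lemma gt_adj_word (x y : V) : adj x y ->
  (exists b, gt_word y = rcons (gt_word x) b) \/ (exists b, gt_word x = rcons (gt_word y) b).
Proof.
rewrite /gt_adj /gt_child !inE => /orP [] /andP [h _].
  by left; case/orP: h => /eqP ->; eexists.
by right; case/orP: h => /eqP ->; eexists.
Qed.

Lemma gt_adj_copy (x y : V) : adj x y -> size (gt_word x) < r -> size (gt_word y) < r ->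
  gt_copy x = gt_copy y.
Proof.
rewrite /gt_adj /gt_child => /orP [] /andP [_ /orP [/eqP //|/eqP e]] ltx lty.
  by rewrite e ltnn in lty.
by rewrite e ltnn in ltx.
Qed.

Lemma gt_adj_rcons c w b : size w < r -> adj (gt_vtx c w) (gt_vtx c (rcons w b)).
Proof.
move=> lt_wr; have le_wbr : size (rcons w b) <= r by rewrite size_rcons.
apply/orP; left; rewrite /gt_child !gt_vtx_word ?(ltnW lt_wr) // !gt_vtx_copy lt_wr !inE.
apply/andP; split; first by case: (b); rewrite eqxx ?orbT.
by move: le_wbr; rewrite leq_eqVlt => /orP [/eqP ->|->]; rewrite ?eqxx ?andbT ?orbT.
Qed.

Lemma gt_adj_tree_dist t (x y : V) : adj x y ->
  tree_dist (gt_word y) t <= (tree_dist (gt_word x) t).+1.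
Proof.
case/gt_adj_word => [] [b ->]; first by case: (tree_dist_rcons (gt_word x) t b); lia.
by case: (tree_dist_rcons (gt_word y) t b); lia.
Qed.

Lemma walk_tree_dist t (x y : V) p : walk adj x p y ->
  tree_dist (gt_word x) t <= tree_dist (gt_word y) t + size p.
Proof.
elim: p x => [|z p IH] x [] /=; first by move=> _ ->; rewrite addn0.
case/andP => xz zp zy; have zx : adj z x by rewrite gt_adj_sym.
by rewrite addnS; apply: leq_trans (gt_adj_tree_dist t zx) _; rewrite ltnS; apply: IH.
Qed.

Lemma walk_size (x y : V) p : walk adj x p y -> tree_dist (gt_word x) (gt_word y) <= size p.
Proof. by move/(walk_tree_dist (gt_word y)); rewrite tree_distss. Qed.

Lemma copy_walk c n (a b : seq bool) : size a <= r -> size b <= r -> tree_dist a b = n ->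
  exists p, [/\ walk adj (gt_vtx c a) p (gt_vtx c b), size p = n &
   forall x, x \in p -> x != gt_vtx c b -> x \in inner_copy c].
Proof.
elim: n a b => [|n IH] a b ha hb hd.
  by rewrite (tree_dist_eq0 hd); exists [::].
have neq_ab : a != b by apply: contra_eqN hd => /eqP ->; rewrite tree_distss.
case: (boolP (prefix a b)) => [ab|nab].
  have lt_ab : size a < size b.
    by rewrite ltn_neqAle size_prefix // andbT; apply: contra neq_ab => /eqP/(prefix_size_eq ab) ->.
  set a' := rcons a (nth false b (size a)).
  have a'b : prefix a' b := prefix_rcons_nth false ab lt_ab.
  have le_a'b : size a' <= size b by rewrite size_rcons.
  have hd' : tree_dist a' b = n.
    by move: hd; rewrite !tree_dist_prefix // size_rcons; lia.
  have [p [[pth lst] sp hp]] := IH a' b (leq_trans le_a'b hb) hb hd'.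
  exists (gt_vtx c a' :: p); split; rewrite /= ?sp //.
    by split=> //=; rewrite pth gt_adj_rcons // (leq_trans lt_ab).
  move=> x; rewrite inE => /orP [/eqP ->|/hp //] neq_xb.
  have lt_a'r : size a' < r.
    rewrite ltn_neqAle (leq_trans le_a'b hb) andbT; apply: contra neq_xb => /eqP e.
    by rewrite (prefix_size_eq a'b) //; apply/eqP; rewrite eqn_leq le_a'b e hb.
  by rewrite inE gt_vtx_word ?(ltnW lt_a'r) // gt_vtx_copy lt_a'r andbT eqxx.
case/lastP: a ha hd neq_ab nab => [|a' x] ha hd _ nab; first by rewrite prefix0s in nab.
have lt_a'r : size a' < r by rewrite -(size_rcons a' x).
have hd' : tree_dist a' b = n by move: hd; rewrite tree_dist_rcons_nprefix // => -[].
have [p [[pth lst] sp hp]] := IH a' b (ltnW lt_a'r) hb hd'.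
exists (gt_vtx c a' :: p); split; rewrite /= ?sp //.
  by split=> //=; rewrite pth gt_adj_sym gt_adj_rcons.
move=> y; rewrite inE => /orP [/eqP ->|/hp //] _.
by rewrite inE gt_vtx_word ?(ltnW lt_a'r) // gt_vtx_copy lt_a'r andbT eqxx.
Qed.

Lemma copy_shortest_path c a b : size a <= r -> size b <= r ->
  exists p, [/\ shortest_path adj (gt_vtx c a) p (gt_vtx c b), size p = tree_dist a b &
   forall x, x \in p -> x != gt_vtx c b -> x \in inner_copy c].
Proof.
move=> ha hb; have [p [wp sp hp]] := copy_walk c ha hb erefl.
exists p; split=> //; split=> // q wq.
by rewrite sp -(gt_vtx_word c ha) -(gt_vtx_word c hb); apply: walk_size.
Qed.

Lemma copy_visible (S : {set V}) c a b : size a <= r -> size b <= r ->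
  (forall x, x \in S -> x \in inner_copy c -> x = gt_vtx c a \/ x = gt_vtx c b) ->
  S_visible adj S (gt_vtx c a) (gt_vtx c b).
Proof.
move=> ha hb hS; have [p [sp _ hp]] := copy_shortest_path c ha hb.
exists p; split=> // x; rewrite inE => /orP [/eqP -> _|xp xS]; first by left.
have [-> | /eqP neq_xb] := x =P gt_vtx c b; first by right.
exact: hS (hp x xp neq_xb).
Qed.

Lemma shortest_path_size c (y z : V) p : in_copy c y -> in_copy c z ->
  shortest_path adj y p z -> size p = tree_dist (gt_word y) (gt_word z).
Proof.
move=> cy cz [wp minp].
have [q [[wq _] sq _]] := copy_shortest_path c (size_gt_word y) (size_gt_word z).
rewrite (gt_vtxE cy) (gt_vtxE cz) in wq.
by apply/eqP; rewrite eqn_leq walk_size // andbT -sq; apply: minp.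
Qed.

Lemma shortest_path_rcons (y z : V) p : shortest_path adj y p z -> y != z ->
  exists q, p = rcons q z.
Proof.
case/lastP: p => [|q z'] [[_ lst] _] neq_yz; first by move: neq_yz; rewrite -lst eqxx.
by exists q; move: lst; rewrite last_rcons => ->.
Qed.

Lemma geodesic_inner_size (y z : V) q : walk adj y (rcons q z) z ->
  size (rcons q z) = tree_dist (gt_word y) (gt_word z) -> forall x, x \in q -> size (gt_word x) < r.
Proof.
move=> [+ _] + x xq; case/splitPr: xq => q1 q2.
rewrite rcons_cat cat_path /= => /andP [p1 /andP [xx' p2]] sq.
have d1 : tree_dist (gt_word y) (gt_word x) <= (size q1).+1.
  by rewrite -(size_rcons q1 x); apply: walk_size; split; rewrite ?rcons_path ?p1 ?last_rcons.
have d2 : tree_dist (gt_word x) (gt_word z) <= (size q2).+1.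
  by rewrite -(size_rcons q2 z); apply: walk_size; split; rewrite ?last_rcons.
have {}sq : tree_dist (gt_word y) (gt_word z) = (size q1 + size q2).+2.
  by rewrite -sq size_cat /= size_rcons !addnS.
rewrite ltn_neqAle size_gt_word andbT; apply/negP => /eqP xr.
have ley : size (gt_word y) <= size (gt_word x) by rewrite xr size_gt_word.
have lez : size (gt_word z) <= size (gt_word x) by rewrite xr size_gt_word.
have sum_le : tree_dist (gt_word y) (gt_word x) + tree_dist (gt_word x) (gt_word z) <=
  tree_dist (gt_word y) (gt_word z) by lia.
have [e|e] := tree_dist_deepest ley lez sum_le.
  by move: d2; rewrite e; lia.
by move: d1; rewrite e; lia.
Qed.

Lemma inner_path_copy (y : V) q : path adj y q ->
  all (fun x : V => size (gt_word x) < r) (y :: q) -> all (fun x : V => gt_copy x == gt_copy y) q.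
Proof.
elim: q y => [|x q IH] y //= /andP [yx xq] /and3P [ly lx lq].
by rewrite (gt_adj_copy yx ly lx) eqxx /=; apply: IH => //=; rewrite lx.
Qed.

Lemma gt_adj_exit_subtree u b (x x' : V) : adj x x' -> prefix (rcons u b) (gt_word x) ->
  ~~ prefix (rcons u b) (gt_word x') -> gt_word x' = u.
Proof.
case/gt_adj_word => [[c ->] ux /negP []|[c ->] ux nux']; first exact: prefix_rconsr.
set w := gt_word x' in ux nux' *.
have /orP [uw|wu] := prefix_total ux (prefix_rcons w c); first by rewrite uw in nux'.
have le_uw : size u <= size w by move: (size_prefix ux); rewrite !size_rcons.
move: (size_prefix wu); rewrite size_rcons leq_eqVlt => /orP [/eqP e|].
  by move: nux'; rewrite -(prefix_size_eq wu) ?size_rcons // prefix_refl.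
rewrite ltnS => le_wu; have /orP [] := prefix_total wu (prefix_rcons u b);
  by move/prefix_size_eq => -> //; apply/eqP; rewrite eqn_leq le_uw le_wu.
Qed.

Lemma walk_exit_subtree u b (y z : V) p : walk adj y p z -> prefix (rcons u b) (gt_word y) ->
  ~~ prefix (rcons u b) (gt_word z) -> exists2 x, x \in p & gt_word x = u.
Proof.
elim: p y => [|x p IH] y [/= pth lst]; first by rewrite lst => ->.
move/andP: pth => [yx xp] uy nuz.
have [ux|nux] := boolP (prefix (rcons u b) (gt_word x)).
  by have [x' x'p <-] := IH x (conj xp lst) ux nuz; exists x'; rewrite // inE x'p orbT.
by exists x; [rewrite inE eqxx | apply: gt_adj_exit_subtree yx uy nux].
Qed.

Lemma walk_enter_subtree u b (y z : V) p : walk adj y p z -> ~~ prefix (rcons u b) (gt_word y) ->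
  prefix (rcons u b) (gt_word z) -> exists2 x, x \in y :: p & gt_word x = u.
Proof.
elim: p y => [|x p IH] y [/= pth lst]; first by rewrite lst => /negP.
move/andP: pth => [yx xp] nuy uz.
have [ux|nux] := boolP (prefix (rcons u b) (gt_word x)).
  exists y; first by rewrite inE eqxx.
  by apply: gt_adj_exit_subtree ux nuy; rewrite gt_adj_sym.
by have [x' x'p <-] := IH x (conj xp lst) nux uz; exists x'; rewrite // inE x'p orbT.
Qed.

Lemma walk_meets_inner (y z : V) p w : walk adj y p z -> tree_inner (gt_word y) (gt_word z) w ->
  exists2 x, x \in p & gt_word x = w.
Proof.
move=> wp inn; have [neq_yw _ _] := tree_inner_neq inn.
case/orP: inn => /sep_branchP [b [uy nuz _]]; first exact: walk_exit_subtree wp uy nuz.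
have [x + ew] := walk_enter_subtree wp nuz uy; rewrite inE => /orP [/eqP exy|]; last by exists x.
by move: neq_yw; rewrite -ew exy eqxx.
Qed.

(* The [S]-avoiding geodesic from [y] to [z] has its inner vertices in a single
   copy [c'], that of [y] if [y] is not a leaf, and passes through every inner
   vertex of the tree geodesic between their words. *)
Lemma mvs_geodesic_copy c (S : {set V}) (y z : V) : mutual_visibility_set adj S ->
  y \in S -> z \in S -> in_copy c y -> in_copy c z ->
  exists2 c', (size (gt_word y) < r -> c' = gt_copy y) &
    forall w, tree_inner (gt_word y) (gt_word z) w -> gt_vtx c' w \notin S.
Proof.
move=> mvS yS zS cy cz.
have [<-|neq_yz] := eqVneq y z.
  by exists (gt_copy y) => // w /tree_inner_neq [_ _]; rewrite eqxx.
have [p [sp vis]] := mvS y z yS zS.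
have [q eq_p] := shortest_path_rcons sp neq_yz; subst p.
have [wq _] := sp.
have inner_q := geodesic_inner_size wq (shortest_path_size cy cz sp).
clear sp; case: q => [|x0 q] in wq inner_q vis *.
  exists (gt_copy y) => // w inn; have [_ ne_zw _] := tree_inner_neq inn.
  by have [x] := walk_meets_inner wq inn; rewrite inE => /eqP -> ezw; rewrite ezw eqxx in ne_zw.
have [/= /andP [yx0 pq] _] := wq.
have copy_q : all (fun x : V => gt_copy x == gt_copy x0) (x0 :: q).
  rewrite /= eqxx; apply: inner_path_copy; first by move: pq; rewrite rcons_path => /andP [].
  by apply/allP => x /inner_q.
exists (gt_copy x0).
  by move=> ly; rewrite (gt_adj_copy yx0 ly (inner_q x0 (mem_head _ _))).
move=> w inn; have [ne_yw ne_zw _] := tree_inner_neq inn.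
have [x xp ew] := walk_meets_inner wq inn.
have xq : x \in x0 :: q.
  move: xp; rewrite /= -rcons_cons mem_rcons inE => /orP [/eqP exz|//].
  by rewrite -ew exz eqxx in ne_zw.
rewrite -ew gt_vtxE; last by rewrite /in_copy (allP copy_q x xq) orbT.
have yxp : x \in y :: rcons (x0 :: q) z by rewrite in_cons xp orbT.
apply/negP => xS; have [exy|exz] := vis x yxp xS.
  by rewrite -ew exy eqxx in ne_yw.
by rewrite -ew exz eqxx in ne_zw.
Qed.

Definition leaf_below (u : seq bool) : V := gt_vtx false (u ++ nseq (r - size u) false).

Lemma leaf_below_word u : size u <= r -> gt_word (leaf_below u) = u ++ nseq (r - size u) false.
Proof. by move=> le_ur; rewrite gt_vtx_word // size_cat size_nseq subnKC. Qed.

Lemma leaf_below_leaf u : size u <= r -> leaf_below u \in leaves.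
Proof. by move=> le_ur; rewrite inE leaf_below_word // size_cat size_nseq subnKC. Qed.

Lemma prefix_leaf_below u : size u <= r -> prefix u (gt_word (leaf_below u)).
Proof. by move=> le_ur; rewrite leaf_below_word // prefix_prefix. Qed.

Lemma below_children_neq (l1 l2 : V) u b :
  prefix (rcons u b) (gt_word l1) -> prefix (rcons u (~~ b)) (gt_word l2) -> l1 != l2.
Proof. by move=> ub1 nub2; apply: contraTneq ub1 => ->; apply: prefix_rcons_negb. Qed.

Definition inner_vertices : {set V} := [set x | size (gt_word x) < r].

Lemma card_leaves : #|leaves| = 2 ^ r.
Proof.
pose f (t : r.-tuple bool) := gt_vtx false t.
have f_inj : injective f.
  by move=> t1 t2 /(congr1 (@gt_word r)); rewrite !gt_vtx_word ?size_tuple // => /val_inj.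
have -> : leaves = f @: setT.
  apply/setP => x; rewrite inE; apply/idP/imsetP => [/eqP leaf_x|[t _ ->]].
    by exists (Tuple (introT eqP leaf_x)); rewrite // /f gt_vtxE // /in_copy leaf_x eqxx.
  by rewrite /f gt_vtx_word ?size_tuple.
by rewrite card_imset // cardsT card_tuple card_bool.
Qed.

Lemma card_inner_vertices : #|inner_vertices| = 2 ^ r.+1 - 2.
Proof.
pose g (u : bool * {d : 'I_r & d.-tuple bool}) := gt_vtx u.1 (tagged u.2).
have size_u (u : {d : 'I_r & d.-tuple bool}) : size (tagged u : seq bool) < r.
  by case: u => d t /=; rewrite size_tuple.
have g_inj : injective g.
  move=> [c1 u1] [c2 u2]; rewrite /g /= => e.
  have := congr1 (@gt_copy r) e; rewrite !gt_vtx_copy !size_u !andbT => <-.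
  have := congr1 (@gt_word r) e; rewrite !gt_vtx_word ?(ltnW (size_u _)) //.
  by move/tagged_tuple_inj ->.
have -> : inner_vertices = g @: setT.
  apply/setP => x; rewrite inE; apply/idP/imsetP => [lt_xr|[u _ ->]].
    exists (gt_copy x, existT _ (Ordinal lt_xr) (in_tuple (gt_word x))) => //.
    by rewrite /g gt_vtxE // /in_copy eqxx orbT.
  by rewrite /g gt_vtx_word ?size_u // ltnW.
rewrite card_imset // cardsT card_prod card_bool card_tagged sumnE big_map big_enum /=.
under eq_bigr do rewrite card_tuple card_bool.
by rewrite sum_exp2 expnS; have := expn_gt0 2 r; lia.
Qed.

Lemma leaves_add_mvs z : z \in inner_vertices -> mutual_visibility_set adj (leaves :|: [set z]).
Proof.
rewrite inE => lt_zr u v uS vS.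
pose c := if (u == z) || (v == z) then gt_copy z else ~~ gt_copy z.
have vtxE y : y \in leaves :|: [set z] -> (y == z -> gt_copy z = c) -> gt_vtx c (gt_word y) = y.
  case/setUP => [/(leaves_in_copy c) cy _|/set1P -> /(_ (eqxx z)) cz]; apply: gt_vtxE => //.
  by rewrite /in_copy cz eqxx orbT.
have eu : gt_vtx c (gt_word u) = u by apply: vtxE => // /eqP uz; rewrite /c uz eqxx.
have ev : gt_vtx c (gt_word v) = v by apply: vtxE => // /eqP vz; rewrite /c vz eqxx orbT.
rewrite -eu -ev; apply: copy_visible; rewrite ?size_gt_word // => x /setUP [].
  by rewrite !inE => /eqP ->; rewrite ltnn.
move=> /set1P -> /inner_copyP [_]; rewrite eu ev /c.
by have [-> | _] := eqVneq u z; [left | have [->|_] := eqVneq v z; [right | case: (gt_copy z)]].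
Qed.

Lemma card_leaves_add z : z \in inner_vertices -> #|leaves :|: [set z]| = 2 ^ r + 1.
Proof.
rewrite inE => lt_zr; have z_leaf : z \notin leaves by rewrite inE neq_ltn lt_zr.
by rewrite setUC cardsU1 z_leaf card_leaves addnC.
Qed.

Section MutualVisibility.
Variable S : {set V}.
Hypotheses (r_gt1 : 1 < r) (mvS : mutual_visibility_set adj S).

Section Shadow.
Variable c : bool.
Local Notation P := (S :&: inner_copy c).
Hypothesis P_gt1 : 1 < #|P|.

Lemma inner_part_word_inj x y : x \in P -> y \in P -> gt_word x = gt_word y -> x = y.
Proof.
move=> /setIP [_ xc] /setIP [_ yc] e.
by rewrite -(inner_copy_vtx xc) -(inner_copy_vtx yc) e.
Qed.

Lemma inner_part_not_inner x z z' : x \in P -> z \in P -> z' \in S -> in_copy c z' ->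
  ~~ tree_inner (gt_word z) (gt_word z') (gt_word x).
Proof.
move=> /setIP [xS xc] /setIP [zS zc] z'S cz'; have /inner_copyP [lt_zr cz] := zc.
have [c' c'z notS] := mvs_geodesic_copy mvS zS z'S (inner_copy_in_copy zc) cz'.
by apply/negP => /notS; rewrite c'z // cz inner_copy_vtx // xS.
Qed.

Definition shadow x : {set V} :=
  [set l in leaves | [forall z in P, (z != x) ==> tree_inner (gt_word z) (gt_word l) (gt_word x)]].

Lemma shadow_sub x : x \in P -> shadow x \subset leaves :\: S.
Proof.
move=> xP; apply/subsetP => l; rewrite inE => /andP [leaf_l /forall_inP sep].
rewrite inE leaf_l andbT; apply/negP => lS.
have [z zP neq_zx] := card_gt1_neq x P_gt1.
have := inner_part_not_inner xP zP lS (leaves_in_copy c leaf_l).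
by rewrite (implyP (sep z zP) neq_zx).
Qed.

Lemma shadow_disjoint x y : x \in P -> y \in P -> x != y -> [disjoint shadow x & shadow y].
Proof.
move=> xP yP neq_xy; rewrite -setI_eq0; apply/eqP/setP => l; rewrite !inE; apply/negP.
case/andP => /andP [_ /forall_inP sepx] /andP [_ /forall_inP sepy].
have neq_yx : y != x by rewrite eq_sym.
have dy := tree_inner_dist (implyP (sepx y yP) neq_yx).
have dx := tree_inner_dist (implyP (sepy x xP) neq_xy).
have : tree_dist (gt_word x) (gt_word y) = 0 by move: dx dy; rewrite (tree_distC (gt_word y)); lia.
by move/tree_dist_eq0/(inner_part_word_inj xP yP)/eqP; rewrite (negbTE neq_xy).
Qed.

Section ShadowCard.
Variable x : V.
Hypothesis xP : x \in P.
Local Notation w := (gt_word x).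

Lemma inner_part_neq_word z : z \in P -> z != x -> gt_word z != w.
Proof. by move=> zP; apply: contraNneq => /(inner_part_word_inj zP xP) ->. Qed.

Lemma leaf_neq_word l : l \in leaves -> gt_word l != w.
Proof. by have /setIP [_ /inner_copyP [lt_wr _]] := xP; move/leaf_word_neq; apply. Qed.

Lemma shadow_off_branch b l : l \in leaves ->
  (forall z, z \in P -> z != x -> prefix (rcons w b) (gt_word z)) ->
  ~~ prefix (rcons w b) (gt_word l) -> l \in shadow x.
Proof.
move=> leaf_l below nbelow_l; rewrite inE leaf_l; apply/forall_inP => z zP; apply/implyP => neq_zx.
by rewrite /tree_inner (sep_branchI (below z zP neq_zx) nbelow_l) ?leaf_neq_word.
Qed.

Lemma shadow_on_branch b l : l \in leaves ->
  (forall z, z \in P -> z != x -> ~~ prefix (rcons w b) (gt_word z)) ->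
  prefix (rcons w b) (gt_word l) -> l \in shadow x.
Proof.
move=> leaf_l nbelow below_l; rewrite inE leaf_l; apply/forall_inP => z zP; apply/implyP => neq_zx.
by rewrite /tree_inner (sep_branchI below_l (nbelow z zP neq_zx)) ?orbT ?inner_part_neq_word.
Qed.

Lemma card_shadow_outside b0 :
  (forall z, z \in P -> z != x -> prefix (rcons w b0) (gt_word z)) -> 1 < #|shadow x|.
Proof.
move=> below; have /setIP [_ /inner_copyP [lt_wr _]] := xP.
have shadowI u : size u <= r -> ~~ prefix (rcons w b0) (gt_word (leaf_below u)) ->
    leaf_below u \in shadow x.
  by move=> le_ur; apply: shadow_off_branch; rewrite ?leaf_below_leaf.
case ew : w => [|w0 w'].
  have le2r (b : bool) : size [:: ~~ b0; b] <= r by [].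
  apply/card_gt1P; exists (leaf_below [:: ~~ b0; false]), (leaf_below [:: ~~ b0; true]).
  have off_b0 b : ~~ prefix (rcons w b0) (gt_word (leaf_below [:: ~~ b0; b])).
    rewrite ew; apply: (@prefix_rcons_negb [::]).
    exact: prefix_trans (prefix_rcons [:: ~~ b0] b) (prefix_leaf_below (le2r b)).
  split; [exact: shadowI | exact: shadowI |].
  by apply: (@below_children_neq _ _ [:: ~~ b0] false); apply: prefix_leaf_below.
have le_r1 : size (rcons w (~~ b0)) <= r by rewrite size_rcons.
have le_r2 : size [:: ~~ w0] <= r by rewrite (leq_trans _ lt_wr) // ew.
have w0_w : prefix [:: w0] (rcons w (~~ b0)) by rewrite ew /= eqxx prefix0s.
apply/card_gt1P; exists (leaf_below (rcons w (~~ b0))), (leaf_below [:: ~~ w0]); split.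
- by apply: shadowI; rewrite // prefix_rcons_negb // prefix_leaf_below.
- apply: shadowI => //; apply/negP => below_l.
  have w0_wb : prefix [:: w0] (rcons w b0) by rewrite ew /= eqxx prefix0s.
  have /negP [] := @prefix_rcons_negb [::] _ w0 (prefix_leaf_below le_r2).
  exact: prefix_trans w0_wb below_l.
- apply: (@below_children_neq _ _ [::] w0); last exact: prefix_leaf_below.
  exact: prefix_trans w0_w (prefix_leaf_below le_r1).
Qed.

Lemma card_shadow_below :
  (forall z, z \in P -> z != x -> ~~ prefix w (gt_word z)) -> 1 < #|shadow x|.
Proof.
move=> nbelow; have /setIP [_ /inner_copyP [lt_wr _]] := xP.
have shadowI b : leaf_below (rcons w b) \in shadow x.
  have le_wbr : size (rcons w b) <= r by rewrite size_rcons.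
  apply: (shadow_on_branch (b := b)); rewrite ?leaf_below_leaf ?prefix_leaf_below // => z zP neq_zx.
  by apply: contra (nbelow z zP neq_zx); apply: prefix_rconsl.
apply/card_gt1P; exists (leaf_below (rcons w false)), (leaf_below (rcons w true)).
split=> //; apply: (@below_children_neq _ _ w false);
  by apply: prefix_leaf_below; rewrite size_rcons.
Qed.

Lemma card_shadow : 1 < #|shadow x|.
Proof.
have [z0 z0P neq_z0x] := card_gt1_neq x P_gt1.
have no_inner z z' : z \in P -> z' \in P -> ~~ tree_inner (gt_word z) (gt_word z') w.
  by move=> zP /setIP [z'S z'c]; apply: inner_part_not_inner (inner_copy_in_copy z'c).
have child_below z : z \in P -> z != x -> prefix w (gt_word z) ->
    prefix (rcons w (nth false (gt_word z) (size w))) (gt_word z).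
  move=> zP neq_zx wz; have lt_wz : size w < size (gt_word z).
    rewrite ltn_neqAle (size_prefix wz) andbT; apply: contraNneq (inner_part_neq_word zP neq_zx).
    by move/(prefix_size_eq wz) ->.
  exact: prefix_rcons_nth wz lt_wz.
have [wz0|nwz0] := boolP (prefix w (gt_word z0)).
  apply: (card_shadow_outside (b0 := nth false (gt_word z0) (size w))) => z zP neq_zx.
  apply: contraNT (no_inner z0 z z0P zP) => nbelow.
  by rewrite /tree_inner (sep_branchI (child_below z0 z0P neq_z0x wz0) nbelow) ?inner_part_neq_word.
apply: card_shadow_below => z zP neq_zx; apply/negP => wz.
have := no_inner z z0 zP z0P; rewrite /tree_inner (sep_branchI (child_below z zP neq_zx wz)) //.
  by apply: contra nwz0; apply: prefix_rconsl.
by apply: contraNneq nwz0 => ->; apply: prefix_refl.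
Qed.

End ShadowCard.

Lemma card_inner_part : 2 * #|P| <= #|leaves :\: S|.
Proof.
apply: leq_trans (sum_card_disjoint shadow_sub shadow_disjoint).
by rewrite mulnC -sum_nat_const; apply: leq_sum => x /card_shadow.
Qed.

End Shadow.

Definition crossing_leaf_pairs (w v : seq bool) := exists a1 a2 b1 b2 : V,
  [/\ [&& a1 \in leaves, a2 \in leaves, b1 \in leaves & b2 \in leaves], a1 != a2, b1 != b2 &
   forall a b, a \in [:: a1; a2] -> b \in [:: b1; b2] ->
     tree_inner (gt_word a) (gt_word b) w && tree_inner (gt_word a) (gt_word b) v].

Lemma crossing_leaf_pairsC w v : crossing_leaf_pairs w v -> crossing_leaf_pairs v w.
Proof.
case=> a1 [a2 [b1 [b2 [leaf n1 n2 sep]]]].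
by exists a1, a2, b1, b2; split=> // a b ha hb; rewrite andbC; apply: sep.
Qed.

Lemma crossing_leaf_pairs_nested w v : size w < r -> prefix v w -> crossing_leaf_pairs w v.
Proof.
move=> lt_wr vw; pose ws := if w is [::] then [:: false] else w; pose bb := head false ws.
have lt_wsr : size ws < r by rewrite /ws; case: (w) lt_wr.
have w_ws : prefix w ws by rewrite /ws; case: (w) => [|? ?]; rewrite ?prefix_refl.
have bb_ws : prefix [:: bb] ws by rewrite /bb /ws; case: (w) => [|? ?] //=; rewrite eqxx prefix0s.
have le_wsr (b : bool) : size (rcons ws b) <= r by rewrite size_rcons.
have le_2r (b : bool) : size [:: ~~ bb; b] <= r by [].
exists (leaf_below (rcons ws false)), (leaf_below (rcons ws true)).
exists (leaf_below [:: ~~ bb; false]), (leaf_below [:: ~~ bb; true]); split.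
- by rewrite !leaf_below_leaf.
- by apply: (@below_children_neq _ _ ws false); apply: prefix_leaf_below.
- by apply: (@below_children_neq _ _ [:: ~~ bb] false); apply: prefix_leaf_below.
move=> a b; rewrite !inE => ha hb.
have [ba ->] : exists ba, a = leaf_below (rcons ws ba) by case/orP: ha => /eqP ->; eexists.
have [bc ->] : exists bc, b = leaf_below [:: ~~ bb; bc] by case/orP: hb => /eqP ->; eexists.
have ws_a := prefix_rconsl (prefix_leaf_below (le_wsr ba)).
have nbb_b := prefix_trans (prefix_rcons [:: ~~ bb] bc) (prefix_leaf_below (le_2r bc)).
have /[!inE] /eqP size_a := leaf_below_leaf (le_wsr ba).
have inner u : prefix u ws -> size u < r ->
    tree_inner (gt_word (leaf_below (rcons ws ba))) (gt_word (leaf_below [:: ~~ bb; bc])) u.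
  move=> u_ws lt_ur; apply: tree_inner_split (prefix_trans bb_ws ws_a) nbb_b _ _ _.
  - exact: prefix_trans u_ws ws_a.
  - by rewrite size_a.
  - exact: leaf_word_neq (leaf_below_leaf (le_2r bc)) lt_ur.
have lt_vr : size v < r by rewrite (leq_ltn_trans (size_prefix vw)).
by rewrite !inner // (prefix_trans vw w_ws).
Qed.

Lemma crossing_leaf_pairs_incomparable w v : size w < r -> size v < r ->
  ~~ prefix v w -> ~~ prefix w v -> crossing_leaf_pairs w v.
Proof.
move=> lt_wr lt_vr nvw nwv.
have le_r u (b : bool) : size u < r -> size (rcons u b) <= r by rewrite size_rcons.
exists (leaf_below (rcons w false)), (leaf_below (rcons w true)).
exists (leaf_below (rcons v false)), (leaf_below (rcons v true)); split.
- by rewrite !leaf_below_leaf ?le_r.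
- by apply: (@below_children_neq _ _ w false); apply: prefix_leaf_below; apply: le_r.
- by apply: (@below_children_neq _ _ v false); apply: prefix_leaf_below; apply: le_r.
move=> a b; rewrite !inE => ha hb.
have [ba ->] : exists ba, a = leaf_below (rcons w ba) by case/orP: ha => /eqP ->; eexists.
have [bc ->] : exists bc, b = leaf_below (rcons v bc) by case/orP: hb => /eqP ->; eexists.
have wa := prefix_leaf_below (le_r w ba lt_wr); have vb := prefix_leaf_below (le_r v bc lt_vr).
have not_both s : prefix w s -> prefix v s -> False.
  by move=> ws vs; move: (prefix_total ws vs); rewrite (negbTE nwv) (negbTE nvw).
rewrite /tree_inner (sep_branchI wa) ?(sep_branchI vb) ?orbT //.
- by apply/negP => /prefix_rconsl /(not_both _ (prefix_rconsl wa)).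
- exact: leaf_word_neq (leaf_below_leaf (le_r w ba lt_wr)) lt_vr.
- by apply/negP => /prefix_rconsl /not_both; apply; apply: prefix_rconsl vb.
- exact: leaf_word_neq (leaf_below_leaf (le_r v bc lt_vr)) lt_wr.
Qed.

Lemma crossing_leaf_pairs_inner w v : size w < r -> size v < r -> crossing_leaf_pairs w v.
Proof.
move=> lt_wr lt_vr; have [vw|nvw] := boolP (prefix v w).
  exact: crossing_leaf_pairs_nested.
have [wv|nwv] := boolP (prefix w v).
  exact/crossing_leaf_pairsC/crossing_leaf_pairs_nested.
exact: crossing_leaf_pairs_incomparable.
Qed.

Lemma both_copies_missing_leaves x1 x2 : x1 \in S :&: inner_copy true ->
  x2 \in S :&: inner_copy false -> 1 < #|leaves :\: S|.
Proof.
move=> /setIP [x1S x1c] /setIP [x2S x2c].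
have /inner_copyP [lt_x1r _] := x1c; have /inner_copyP [lt_x2r _] := x2c.
have [a1 [a2 [b1 [b2 [/and4P [la1 la2 lb1 lb2] n1 n2 sep]]]]] :=
  crossing_leaf_pairs_inner lt_x1r lt_x2r.
rewrite ltnNge; apply/negP => le1.
have pick u1 u2 : u1 \in leaves -> u2 \in leaves -> u1 != u2 ->
    exists2 u, u \in S & u \in [:: u1; u2].
  move=> l1 l2 neq_u; have [u1S|nu1S] := boolP (u1 \in S); first by exists u1; rewrite ?inE ?eqxx.
  have [u2S|nu2S] := boolP (u2 \in S); first by exists u2; rewrite ?inE ?eqxx ?orbT.
  move: le1; rewrite leqNgt => /negP []; apply/card_gt1P.
  by exists u1, u2; rewrite !in_setD nu1S nu2S l1 l2.
have [a aS ha] := pick a1 a2 la1 la2 n1.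
have [b bS hb] := pick b1 b2 lb1 lb2 n2.
have la : a \in leaves by move: ha; rewrite mem_seq2 => /orP [] /eqP ->.
have lb : b \in leaves by move: hb; rewrite mem_seq2 => /orP [] /eqP ->.
have /andP [inner1 inner2] := sep a b ha hb.
have [[] _ notS] := mvs_geodesic_copy mvS aS bS (leaves_in_copy false la) (leaves_in_copy false lb).
  by move: (notS _ inner1); rewrite inner_copy_vtx // x1S.
by move: (notS _ inner2); rewrite inner_copy_vtx // x2S.
Qed.

Lemma card_outside_leaves :
  #|S :\: leaves| = #|S :&: inner_copy true| + #|S :&: inner_copy false|.
Proof.
rewrite -(cardsID (inner_copy true) (S :\: leaves)); congr (_ + _); apply: eq_card => x;
  have size_neq : (size (gt_word x) != r) = (size (gt_word x) < r)
    by rewrite ltn_neqAle size_gt_word andbT.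
all: by rewrite !inE size_neq; case: (x \in S) (gt_copy x) (size (gt_word x) < r) => [] [] [].
Qed.

Lemma card_outside_leaves_bound : #|S :\: leaves| <= #|leaves :\: S|.+1 /\
  (#|S :\: leaves| = #|leaves :\: S|.+1 -> #|leaves :\: S| = 0).
Proof.
rewrite card_outside_leaves; apply: leq_add_halves; try exact: card_inner_part.
by move=> /card_gt0P [x1 x1S] /card_gt0P [x2 x2S]; apply: both_copies_missing_leaves x1S x2S.
Qed.

Lemma card_mvs : #|S| + #|leaves :\: S| = 2 ^ r + #|S :\: leaves|.
Proof. by rewrite -card_leaves -(cardsID leaves S) -(cardsID S leaves) setIC addnAC. Qed.

Lemma mvs_card_le : #|S| <= 2 ^ r + 1.
Proof. by have [le _] := card_outside_leaves_bound; have := card_mvs; lia. Qed.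

Lemma mvs_card_eq : #|S| = 2 ^ r + 1 ->
  exists2 x, x \in inner_vertices & S = leaves :|: [set x].
Proof.
move=> card_S; have [_ tight] := card_outside_leaves_bound; have := card_mvs.
rewrite card_S => card_eq; have no_missing : #|leaves :\: S| = 0 by apply: tight; lia.
have /cards1P [x ex] : #|S :\: leaves| == 1 by apply/eqP; lia.
have leaves_sub : leaves \subset S by rewrite -setD_eq0 -cards_eq0 no_missing.
exists x; last by rewrite -ex -{1}(setID S leaves) (setIidPr leaves_sub).
have : x \in S :\: leaves by rewrite ex set11.
by rewrite !inE => /andP [nleaf _]; rewrite ltn_neqAle nleaf size_gt_word.
Qed.

End MutualVisibility.

Lemma leaves_add_inj : {in inner_vertices &, injective (fun x => leaves :|: [set x])}.
Proof.
move=> x y; rewrite !inE => lt_xr _ e.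
have : x \in leaves :|: [set y] by rewrite -e !inE eqxx orbT.
by rewrite !inE => /orP [/eqP leaf_x|/eqP //]; rewrite leaf_x ltnn in lt_xr.
Qed.

Lemma mu_setP (S : {set V}) : 1 < r ->
  mu_set adj S <-> S \in [set leaves :|: [set x] | x in inner_vertices].
Proof.
move=> r_gt1; have root_inner : gt_vtx true [::] \in inner_vertices.
  by rewrite inE gt_vtx_word // ltnW.
split=> [[mvS maxS]|/imsetP [x xI ->]].
  have := maxS _ (leaves_add_mvs root_inner); rewrite card_leaves_add // => ge_S.
  have card_S : #|S| = 2 ^ r + 1 by apply/eqP; rewrite eqn_leq mvs_card_le.
  by have [x xI ->] := mvs_card_eq r_gt1 mvS card_S; apply/imsetP; exists x.
split=> [|S' mvS']; first exact: leaves_add_mvs.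
by rewrite card_leaves_add // mvs_card_le.
Qed.

End GluedTree.

Theorem mainTheorem3 (r : nat) (hr : 2 <= r) :
  mu_number (@gt_adj r) (2 ^ r + 1) /\
  num_mu_sets (@gt_adj r) (2 ^ r.+1 - 2).
Proof.
have root_inner : gt_vtx r true [::] \in inner_vertices r by rewrite inE gt_vtx_word // ltnW.
split.
  split=> [|S]; last exact: mvs_card_le.
  exists (leaves r :|: [set gt_vtx r true [::]]).
  by rewrite card_leaves_add //; split; first exact: leaves_add_mvs.
exists [set leaves r :|: [set x] | x in inner_vertices r]; split=> [S|].
  exact: iff_sym (mu_setP S hr).
by rewrite card_in_imset ?card_inner_vertices //; apply: leaves_add_inj.
Qed.
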